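(* Let $q$ be a prime power and let $\lambda$ be the Liouville function on monic polynomials of $\mathbb{F}_{q^2}[T]$. For every unitary self-reciprocal polynomial $f\in\mathbb{F}_{q^2}[T]$ we have $\lambda(f)=(-1)^{\deg f}$.
   Context: The Liouville function $\lambda$ is the unique completely multiplicative function on monic polynomials of $\mathbb{F}_{q^2}[T]$ with $\lambda(P)=-1$ for every monic irreducible $P$. For a monic $f\in\mathbb{F}_{q^2}[T]$ of degree $n$ with $f(0)\neq0$, let $\sigma(f)$ be the polynomial obtained by raising each coefficient of $f$ to the $q$-th power, and define $\tilde f(T)=T^n\sigma(f)(T^{-1})/\sigma(f)(0)$; explicitly, if $f=a_0+a_1T+\cdots+a_{n-1}T^{n-1}+T^n$ then $\tilde f=(1/a_0)^q+(a_{n-1}/a_0)^qT+\cdots+(a_1/a_0)^qT^{n-1}+T^n$. A monic $f$ with $f(0)\ne0$ is unitary self-reciprocal if $f=\tilde f$ (the constant polynomial $1$ included). *)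

From HB Require Import structures.
From mathcomp Require Import all_boot all_order all_algebra all_field.
Set Implicit Arguments. Unset Strict Implicit. Unset Printing Implicit Defensive.
Import GRing.Theory.
Local Open Scope ring_scope.

Definition prime_power (q : nat) : Prop :=
  exists p k : nat, [/\ prime p, (0 < k)%N & q = (p ^ k)%N].

Definition is_liouville (F : fieldType) (lam : {poly F} -> int) : Prop :=
  [/\ lam 1 = 1,
      (forall f g : {poly F}, f \is monic -> g \is monic ->
          lam (f * g) = lam f * lam g)
    & (forall P : {poly F}, P \is monic -> irreducible_poly P -> lam P = -1)].

(* tilde f = T^n sigma(f)(T^{-1}) / sigma(f)(0), sigma = coefficientwise x |-> x^q;
   coefficient of T^i is (a_{n-i}/a_0)^q where n = deg f. *)
Definition urecip (F : fieldType) (q : nat) (f : {poly F}) : {poly F} :=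
  \poly_(i < size f) ((f`_((size f).-1 - i) / f`_0) ^+ q).

Definition unitary_self_reciprocal (F : fieldType) (q : nat) (f : {poly F}) : bool :=
  [&& f \is monic, f`_0 != 0 & f == urecip q f].

From HB Require Import structures.
From mathcomp Require Import all_boot all_order all_algebra all_solvable all_field zify.
From Stdlib Require Import Classical.
Set Implicit Arguments. Unset Strict Implicit. Unset Printing Implicit Defensive.
Import GRing.Theory.
Local Open Scope ring_scope.

(* The reciprocal [urecip q] is multiplicative, an involution on monic
   polynomials with nonzero constant term, and it preserves irreducibility.
   Hence the monic irreducible factors of a unitary self-reciprocal [f] are
   either self-reciprocal or come in pairs [P], [urecip q P] of equal degree,
   and such a pair contributes [lam = 1] and an even degree. A self-reciprocal
   irreducible [P] has odd degree [d]: in F[X]/(P), the field with q^(2d)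
   elements, a root [a] of [P] satisfies a^(-q) = a^(q^(2j)) for some [j],
   hence a^(q^(4j)) = a^(q^2), so that [d] divides [2j - 1]. *)

Section FrobeniusPower.
Variables (R : comNzRingType) (n : nat).

Definition pFrobeniusX of [pchar R].-nat n := fun x : R => x ^+ n.

Variable charRn : [pchar R].-nat n.

Lemma pFrobeniusX_is_zmod_morphism : zmod_morphism (pFrobeniusX charRn).
Proof. by move=> x y; rewrite /pFrobeniusX exprDn_pchar // exprNn_pchar. Qed.

Lemma pFrobeniusX_is_monoid_morphism : monoid_morphism (pFrobeniusX charRn).
Proof. by split=> [|x y]; rewrite /pFrobeniusX ?expr1n // exprMn. Qed.

HB.instance Definition _ := GRing.isZmodMorphism.Build R R (pFrobeniusX charRn)
  pFrobeniusX_is_zmod_morphism.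
HB.instance Definition _ := GRing.isMonoidMorphism.Build R R (pFrobeniusX charRn)
  pFrobeniusX_is_monoid_morphism.

End FrobeniusPower.

Lemma pchar_nat_card (F : finFieldType) : [pchar F].-nat #|F|.
Proof.
have [p _ charFp] := finPcharP F.
have := abelem_pgroup (fin_ring_pchar_abelem charFp).
by rewrite /pgroup cardsT (eq_pnat _ (pcharf_eq charFp)).
Qed.

Lemma pchar_nat_sqrt_card (F : finFieldType) q :
  #|F| = (q ^ 2)%N -> [pchar F].-nat q.
Proof. by move=> cardF; apply: pnat_dvd (pchar_nat_card F); rewrite cardF dvdn_mulr. Qed.

Lemma expf_cardX (F : finFieldType) (a : F) r : a ^+ (#|F| ^ r)%N = a.
Proof. by elim: r => [|r IHr]; rewrite ?expr1 // expnSr exprM IHr expf_card. Qed.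

Lemma coef_neq0_ltn_size (R : nzRingType) (f : {poly R}) i :
  f`_i != 0 -> (i < size f)%N.
Proof. by apply: contraR; rewrite -leqNgt => /(nth_default 0) ->. Qed.

Lemma coef0_dvdp_neq0 (F : fieldType) (g f : {poly F}) :
  g %| f -> f`_0 != 0 -> g`_0 != 0.
Proof. by move=> /divpK <-; rewrite coef0M mulf_eq0 negb_or => /andP[]. Qed.

Lemma size_mul_predn (R : idomainType) (f g : {poly R}) : f != 0 -> g != 0 ->
  (size (f * g)).-1 = ((size f).-1 + (size g).-1)%N.
Proof.
move=> f0 g0; rewrite size_mul //.
move: (polySpred f0) (polySpred g0); case: (size f) (size g) => [|a] [|b] //= _ _.
by rewrite addnS.
Qed.

Lemma monic_size_le1 (R : nzRingType) (f : {poly R}) :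
  f \is monic -> (size f <= 1)%N -> f = 1.
Proof.
move=> f_monic f_le1; rewrite [LHS]size1_polyC // -polyC1 -(monicP f_monic) lead_coefE.
by case: (size f) f_le1 => [|[]].
Qed.

Lemma irredp_scale (F : fieldType) (a : F) (P : {poly F}) :
  a != 0 -> irreducible_poly P -> irreducible_poly (a *: P).
Proof.
move=> a_neq0 [P_gt1 P_irr]; split=> [|g g_neq1]; first by rewrite size_scale.
rewrite dvdpZr // => /(P_irr _ g_neq1) /eqp_trans; apply.
by rewrite eqp_sym eqp_scale.
Qed.

Lemma exists_irreducible_dvdp (F : fieldType) (f : {poly F}) :
  (1 < size f)%N -> exists2 P, irreducible_poly P & P %| f.
Proof.
have [n] := ubnP (size f); elim: n f => // n IHn f lt_f_n f_gt1.
have [f_irr|f_red] := classic (irreducible_poly f); first by exists f.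
have [g [g_neq1 g_dvd g_neqp]] :
    exists g : {poly F}, [/\ size g != 1%N, g %| f & ~ g %= f].
  apply: NNPP => no_g; apply: f_red; split=> // g g_neq1 g_dvd.
  by apply: NNPP => g_neqp; apply: no_g; exists g.
have f_neq0 : f != 0 by rewrite -size_poly_gt0 ltnW.
have g_neq0 : g != 0 by apply: contraTneq g_dvd => ->; rewrite dvd0p.
have lt_g_f : (size g < size f)%N.
  by rewrite ltn_neqAle dvdp_leq // andbT dvdp_size_eqp //; apply/negP.
have g_gt1 : (1 < size g)%N by rewrite ltn_neqAle eq_sym g_neq1 size_poly_gt0.
have [P P_irr P_dvd] := IHn g (leq_trans lt_g_f lt_f_n) g_gt1.
by exists P; last exact: dvdp_trans P_dvd g_dvd.
Qed.

Lemma exists_monic_irreducible_dvdp (F : fieldType) (f : {poly F}) :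
  (1 < size f)%N -> exists2 P, monic_irreducible_poly P & P %| f.
Proof.
move=> /exists_irreducible_dvdp[P P_irr P_dvd].
have lcP_neq0 : (lead_coef P)^-1 != 0 by rewrite invr_eq0 lead_coef_eq0 irredp_neq0.
exists ((lead_coef P)^-1 *: P); last by rewrite dvdpZl.
split; first exact: irredp_scale.
by apply/monicP; rewrite lead_coefZ mulVf // lead_coef_eq0 irredp_neq0.
Qed.

Lemma exprVn_mulnn_swap (R : unitRingType) (x : R) m n :
  x^-1 ^+ m = x ^+ n -> x ^+ (n * n) = x ^+ (m * m).
Proof.
move=> xVm; rewrite exprM -xVm -exprM [(m * n)%N]mulnC exprM exprVn -xVm.
by rewrite -exprVn invrK -exprM.
Qed.

Lemma odd_of_double_modn j d : j.*2 = 1 %[mod d] -> odd d.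
Proof.
rewrite -[odd d]negbK -dvdn2 => eq_mod; apply/negP => two_dvd_d.
by move: (congr1 (modn^~ 2) eq_mod); rewrite /= !modn_dvdm // !modn2 odd_double.
Qed.

Definition reversep (R : nzRingType) (f : {poly R}) : {poly R} :=
  \poly_(i < size f) f`_((size f).-1 - i).

Lemma reversep0 (R : nzRingType) : reversep (0 : {poly R}) = 0.
Proof. by rewrite /reversep size_poly0 poly_def big_ord0. Qed.

Lemma horner_reversep (R : comUnitRingType) (f : {poly R}) x :
  x \is a GRing.unit -> (reversep f).[x] = x ^+ (size f).-1 * f.[x^-1].
Proof.
move=> x_unit; rewrite (horner_coef_wide _ (size_poly _ _)) horner_coef mulr_sumr.
case: (size f) => [|n]; first by rewrite !big_ord0.
rewrite (reindex_inj rev_ord_inj); apply: eq_bigr => i _ /=.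
have le_i_n : (i <= n)%N by rewrite -ltnS.
by rewrite coef_poly subSS ltnS leq_subr subKn // mulrCA exprVn exprB.
Qed.

Lemma map_reversep (R S : nzRingType) (c : {additive R -> S}) (f : {poly R}) :
  injective c -> map_poly c (reversep f) = reversep (map_poly c f).
Proof.
move=> c_inj; apply/polyP => i; rewrite coef_map !coef_poly size_map_inj_poly ?raddf0 //.
case: ifP => [lt_i_f|_]; last exact: raddf0.
by rewrite ifT // (leq_ltn_trans (leq_subr _ _)) // ltn_predL (leq_ltn_trans _ lt_i_f).
Qed.

Section GenericPoint.
Variable R : idomainType.
Local Notation tofracC := (@tofrac {poly R} \o polyC).

Lemma tofracC_inj : injective tofracC.
Proof. by move=> a b /eqP; rewrite tofrac_eq => /eqP/polyC_inj. Qed.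

Lemma tofrac_horner (f : {poly R}) : (map_poly tofracC f).[tofrac 'X] = tofrac f.
Proof.
rewrite horner_coef size_map_inj_poly ?rmorph0 //; last exact: tofracC_inj.
rewrite -[in RHS](coefK f) poly_def rmorph_sum; apply: eq_bigr => i _.
by rewrite coef_map /= -mul_polyC rmorphM rmorphXn.
Qed.

(* Both sides are compared at the generic point [tofrac 'X]. *)
Lemma reversepM (f g : {poly R}) : reversep (f * g) = reversep f * reversep g.
Proof.
have [->|f0] := eqVneq f 0; first by rewrite mul0r reversep0 mul0r.
have [->|g0] := eqVneq g 0; first by rewrite mulr0 reversep0 mulr0.
pose X : {fraction {poly R}} := tofrac 'X.
have X_unit : X \is a GRing.unit by rewrite unitfE tofrac_eq0 polyX_eq0.
have revE h : tofrac (reversep h) = X ^+ (size h).-1 * (map_poly tofracC h).[X^-1].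
  rewrite -tofrac_horner map_reversep ?horner_reversep ?size_map_inj_poly //;
  exact: tofracC_inj.
apply/eqP; rewrite -tofrac_eq rmorphM /= !revE rmorphM hornerM size_mul_predn //.
by rewrite exprD mulrACA.
Qed.

End GenericPoint.

Section UnitaryReciprocal.
Variables (F : fieldType) (q : nat).
Implicit Types f g : {poly F}.

Lemma coef_urecip f i : (i < size f)%N ->
  (urecip q f)`_i = (f`_((size f).-1 - i) / f`_0) ^+ q.
Proof. by move=> lt_i_f; rewrite coef_poly lt_i_f. Qed.

Lemma coef_urecip_last f : f`_0 != 0 -> (urecip q f)`_(size f).-1 = 1.
Proof.
move=> f0_neq0; rewrite coef_urecip ?ltn_predL ?coef_neq0_ltn_size //.
by rewrite subnn divff // expr1n.
Qed.

Lemma size_urecip f : f`_0 != 0 -> size (urecip q f) = size f.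
Proof.
move=> f0_neq0; apply/eqP; rewrite eqn_leq size_poly /=.
rewrite -(prednK (coef_neq0_ltn_size f0_neq0)) coef_neq0_ltn_size //.
by rewrite coef_urecip_last ?oner_neq0.
Qed.

Lemma urecip_monic f : f`_0 != 0 -> urecip q f \is monic.
Proof. by move=> f0_neq0; rewrite monicE lead_coefE size_urecip ?coef_urecip_last. Qed.

Lemma coef0_urecip f : f \is monic -> (urecip q f)`_0 = (f`_0 ^+ q)^-1.
Proof.
move=> f_monic; rewrite coef_urecip ?size_poly_gt0 ?monic_neq0 // subn0.
by rewrite -lead_coefE (monicP f_monic) div1r exprVn.
Qed.

Lemma coef0_urecip_neq0 f : f \is monic -> f`_0 != 0 -> (urecip q f)`_0 != 0.
Proof. by move=> f_monic f0_neq0; rewrite coef0_urecip // invr_eq0 expf_neq0. Qed.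

Variable charFq : [pchar F].-nat q.

Lemma urecipE f :
  urecip q f = (f`_0 ^+ q)^-1 *: reversep (map_poly (pFrobeniusX charFq) f).
Proof.
apply/polyP => i; rewrite coefZ !coef_poly size_map_poly.
case: ifP => [lt_i_f|_]; last by rewrite mulr0.
rewrite ifT ?(leq_ltn_trans (leq_subr _ _)) ?ltn_predL ?(leq_ltn_trans _ lt_i_f) //.
by rewrite /pFrobeniusX exprMn exprVn mulrC.
Qed.

Lemma urecipM f g : urecip q (f * g) = urecip q f * urecip q g.
Proof.
rewrite !urecipE coef0M exprMn invfM rmorphM reversepM.
by rewrite -scalerAl -scalerAr scalerA.
Qed.

Lemma root_urecip (K : fieldType) (c : {rmorphism F -> K}) f x : x != 0 ->
  root (map_poly c f) x -> root (map_poly c (urecip q f)) (x^-1 ^+ q).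
Proof.
move=> x_neq0 /eqP fx0; apply/eqP.
have charKq : [pchar K].-nat q by rewrite (eq_pnat _ (fmorph_pchar c)).
have frobK : map_poly c (map_poly (pFrobeniusX charFq) f) =
             map_poly (pFrobeniusX charKq) (map_poly c f).
  by rewrite -!map_poly_comp; apply: eq_map_poly => a /=; rewrite /pFrobeniusX rmorphXn.
rewrite urecipE map_polyZ hornerZ map_reversep; last exact: fmorph_inj.
rewrite horner_reversep ?unitfE ?expf_neq0 ?invr_eq0 // frobK exprVn invrK.
by rewrite -[x ^+ q]/(pFrobeniusX charKq x) horner_map fx0 rmorph0 !mulr0.
Qed.

End UnitaryReciprocal.

Section SelfReciprocal.
Variables (F : finFieldType) (q : nat).
Hypothesis cardF : #|F| = (q ^ 2)%N.
Let charFq := pchar_nat_sqrt_card cardF.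
Local Notation urecip := (urecip q).
Local Notation usr := (unitary_self_reciprocal q).
Implicit Types f g h P : {poly F}.

Lemma urecipK f : f \is monic -> f`_0 != 0 -> urecip (urecip f) = f.
Proof.
move=> f_monic f0_neq0; have f_gt0 := coef_neq0_ltn_size f0_neq0.
have Rf0_neq0 := coef0_urecip_neq0 q f_monic f0_neq0.
apply/polyP => i; have [lt_i_f|le_f_i] := ltnP i (size f); last first.
  by rewrite [LHS]nth_default ?size_urecip // nth_default.
rewrite coef_urecip ?size_urecip // coef0_urecip ?urecip_monic // coef_urecip; last first.
  by rewrite (leq_ltn_trans (leq_subr _ _)) ?ltn_predL.
have le_i_f : (i <= (size f).-1)%N by rewrite -ltnS prednK.
by rewrite subKn // invrK -exprMn divfK ?expf_neq0 // -exprM mulnn -cardF expf_card.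
Qed.

Lemma urecip_irreducible P : P \is monic -> P`_0 != 0 ->
  irreducible_poly P -> irreducible_poly (urecip P).
Proof.
move=> P_monic P0_neq0 [P_gt1 P_irr]; rewrite /irreducible_poly size_urecip //.
split=> // g g_neq1 g_dvd.
have RP0_neq0 := coef0_urecip_neq0 q P_monic P0_neq0.
have g0_neq0 := coef0_dvdp_neq0 g_dvd RP0_neq0.
have Rg_dvd : urecip g %| P.
  rewrite -(urecipK P_monic P0_neq0) -(divpK g_dvd) (urecipM charFq).
  exact: dvdp_mull.
have := P_irr _ _ Rg_dvd; rewrite size_urecip // => /(_ g_neq1) /eqp_size.
rewrite size_urecip // => eq_size.
by rewrite -dvdp_size_eqp // eq_size size_urecip.
Qed.

Lemma urecip_dvdp f P : usr f -> P %| f -> urecip P %| f.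
Proof.
case/and3P=> _ _ /eqP def_f P_dvd.
by rewrite def_f -(divpK P_dvd) (urecipM charFq) dvdp_mull.
Qed.

Lemma usr_divp f h : usr f -> usr h -> h %| f -> usr (f %/ h).
Proof.
move=> /and3P[f_monic f0_neq0 /eqP Rf] /and3P[h_monic _ /eqP Rh] h_dvd.
have def_f := divpK h_dvd.
apply/and3P; split; first by rewrite -(monicMr _ h_monic) def_f.
  exact: coef0_dvdp_neq0 (divp_dvd h_dvd) f0_neq0.
apply/eqP/(mulIf (monic_neq0 h_monic)).
by rewrite def_f {1}Rf -{1}def_f (urecipM charFq) -Rh.
Qed.

Lemma usr_mul_urecip P : P \is monic -> P`_0 != 0 -> usr (P * urecip P).
Proof.
move=> P_monic P0_neq0; apply/and3P; split.
- by rewrite monicMl ?urecip_monic.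
- by rewrite coef0M mulf_neq0 ?coef0_urecip_neq0.
- by rewrite (urecipM charFq) urecipK // mulrC.
Qed.

End SelfReciprocal.

Section QuotientField.
Variables (F : finFieldType) (P : {poly F}) (mirrP : monic_irreducible_poly P).
Local Notation K := {poly %/ P with mirrP}.
Local Notation Q := #|F|.
Local Notation d := (size P).-1.
Let c : {rmorphism F -> K} := qpolyC P.
Let alpha : K := 'qX.

Let charKQ r : [pchar K].-nat (Q ^ r)%N.
Proof. by rewrite (eq_pnat _ (fmorph_pchar c)) pnatX pchar_nat_card. Qed.

Let map_frobQ r (g : {poly F}) :
  map_poly (pFrobeniusX (charKQ r)) (map_poly c g) = map_poly c g.
Proof.
rewrite -map_poly_comp; apply: eq_map_poly => a /=.
by rewrite /pFrobeniusX -rmorphXn expf_cardX.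
Qed.

Lemma horner_qX (y : K) : (map_poly c (val y)).[alpha] = y.
Proof.
rewrite -(in_qpoly_comp_horner P (val y) 'X) comp_polyXr; apply: val_inj => /=.
by rewrite Pdiv.CommonRing.rmodp_small // size_mk_monic.
Qed.

Lemma root_qX : root (map_poly c P) alpha.
Proof.
rewrite /root -(in_qpoly_comp_horner P P 'X) comp_polyXr; apply/eqP/val_inj => /=.
by rewrite (mk_monicE mirrP) (Pdiv.RingMonic.rmodpp mirrP.2).
Qed.

Lemma root_qX_expQ r : root (map_poly c P) (alpha ^+ (Q ^ r)%N).
Proof.
rewrite /root -(map_frobQ r P) -[_ ^+ _]/(pFrobeniusX (charKQ r) alpha) horner_map.
by rewrite (eqP root_qX) rmorph0.
Qed.

Lemma qX_expQ_fixes r : alpha ^+ (Q ^ r)%N = alpha -> forall y : K, y ^+ (Q ^ r)%N = y.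
Proof.
move=> alpha_fixed y; rewrite -(horner_qX y) -[_ ^+ _]/(pFrobeniusX (charKQ r) _).
by rewrite -horner_map map_frobQ /= /pFrobeniusX alpha_fixed.
Qed.

Lemma qX_expQ_size : alpha ^+ (Q ^ d)%N = alpha.
Proof. by rewrite -card_qfpoly expf_card. Qed.

Let d_gt0 : (0 < d)%N.
Proof. by rewrite -subn1 subn_gt0; case: mirrP => -[]. Qed.

Lemma qX_expQ_periodic k : alpha ^+ (Q ^ (k * d))%N = alpha.
Proof.
elim: k => [|k IHk]; first by rewrite mul0n expr1.
by rewrite mulSn expnD exprM qX_expQ_size IHk.
Qed.

Lemma qX_expQ_modn a : alpha ^+ (Q ^ a)%N = alpha ^+ (Q ^ (a %% d))%N.
Proof. by rewrite {1}(divn_eq a d) expnD exprM qX_expQ_periodic. Qed.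

(* If [alpha] is fixed then so is all of [K]: its [Q ^ d] elements are roots of
   ['X^(Q ^ r) - 'X]. *)
Lemma qX_expQ_fixed_ge r : (0 < r)%N -> alpha ^+ (Q ^ r)%N = alpha -> (d <= r)%N.
Proof.
move=> r_gt0 /qX_expQ_fixes fixed; have Q_gt1 := finNzRing_gt1 F.
pose W : {poly K} := 'X^(Q ^ r) - 'X.
have size_W : size W = (Q ^ r).+1.
  rewrite /W size_polyDl size_polyXn // size_polyN size_polyX ltnS.
  exact: leq_ltn_trans r_gt0 (ltn_expl r Q_gt1).
have W_neq0 : W != 0 by rewrite -size_poly_gt0 size_W.
have W_roots : all (root W) (enum K).
  by apply/allP => y _; rewrite /root !hornerE fixed subrr.
have := max_poly_roots W_neq0 W_roots (enum_uniq K).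
by rewrite size_W ltnS -cardE card_qfpoly leq_exp2l.
Qed.

Lemma qX_expQ_inj a b : alpha ^+ (Q ^ a)%N = alpha ^+ (Q ^ b)%N -> a = b %[mod d].
Proof.
suff le_mod a' b' : alpha ^+ (Q ^ a')%N = alpha ^+ (Q ^ b')%N -> (b' %% d <= a' %% d)%N.
  by move=> eq_ab; apply/anti_leq; rewrite !le_mod.
rewrite qX_expQ_modn [in RHS]qX_expQ_modn => eq_ab.
have lt_b'_d := ltn_pmod b' d_gt0.
suff : (d <= a' %% d + (d - b' %% d))%N by lia.
apply: qX_expQ_fixed_ge; first by lia.
rewrite expnD exprM eq_ab -(exprM alpha) -(expnD #|F|) subnKC ?qX_expQ_size //.
exact: ltnW.
Qed.

(* The [d] distinct conjugates [alpha ^+ (Q ^ j)], [j < d], are all the roots. *)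
Lemma root_qX_orbit y : root (map_poly c P) y -> exists j, y = alpha ^+ (Q ^ j)%N.
Proof.
pose rs := [seq alpha ^+ (Q ^ j)%N | j <- iota 0 d].
have size_cP : size (map_poly c P) = (size rs).+1.
  by rewrite size_map_poly size_map size_iota prednK // (ltnW mirrP.1.1).
have rs_roots : all (root (map_poly c P)) rs.
  by apply/allP => _ /mapP[j _ ->]; apply: root_qX_expQ.
have rs_uniq : uniq_roots rs.
  rewrite uniq_rootsE map_inj_in_uniq ?iota_uniq // => i j.
  rewrite !mem_iota !add0n => /andP[_ lt_i_d] /andP[_ lt_j_d] /qX_expQ_inj.
  by rewrite !modn_small.
rewrite (all_roots_prod_XsubC size_cP rs_roots rs_uniq) rootZ; last first.
  by rewrite lead_coef_map (monicP mirrP.2) rmorph1 oner_neq0.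
by rewrite root_prod_XsubC => /mapP[j _ ->]; exists j.
Qed.

End QuotientField.

Lemma odd_size_usr_irreducible (F : finFieldType) q (P : {poly F}) :
  #|F| = (q ^ 2)%N -> irreducible_poly P -> unitary_self_reciprocal q P ->
  odd (size P).-1.
Proof.
move=> cardF P_irr /and3P[P_monic P0_neq0 /eqP RP].
pose mirrP : monic_irreducible_poly P := (P_irr, P_monic).
pose alpha : {poly %/ P with mirrP} := 'qX.
have alpha_neq0 : alpha != 0.
  apply: contraNneq P0_neq0 => alpha0; have /eqP := root_qX mirrP.
  rewrite -/alpha alpha0 horner_coef0 coef_map => /(congr1 val) /= /eqP.
  by rewrite polyC_eq0.
(* [alpha^-1 ^+ q] is a root of the reciprocal of [P], that is of [P]. *)
have [j alphaVq] : exists j, alpha^-1 ^+ q = alpha ^+ (#|F| ^ j)%N.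
  apply: root_qX_orbit.
  have := root_urecip (pchar_nat_sqrt_card cardF) alpha_neq0 (root_qX mirrP).
  by rewrite -RP.
have : alpha ^+ (#|F| ^ j.*2)%N = alpha ^+ (#|F| ^ 1)%N.
  by rewrite -addnn expnD (exprVn_mulnn_swap alphaVq) mulnn -cardF expn1.
by move/qX_expQ_inj/odd_of_double_modn.
Qed.

Section Liouville.
Variables (F : finFieldType) (q : nat) (lam : {poly F} -> int).
Hypotheses (cardF : #|F| = (q ^ 2)%N) (lamL : is_liouville lam).
Local Notation urecip := (urecip q).
Local Notation usr := (unitary_self_reciprocal q).

Lemma liouville_usr_factor f : usr f -> (1 < size f)%N ->
  exists2 h, [/\ usr h, h %| f & (1 < size h)%N] & lam h = (-1) ^+ (size h).-1.
Proof.
case: lamL => _ lamM lam_irr usr_f f_gt1.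
have [P [P_irr P_monic] P_dvd] := exists_monic_irreducible_dvdp f_gt1.
have P0_neq0 : P`_0 != 0 by case/and3P: usr_f => _ /(coef0_dvdp_neq0 P_dvd).
have RP_monic := urecip_monic q P0_neq0.
have RP_irr := urecip_irreducible cardF P_monic P0_neq0 P_irr.
have [RP_eq|RP_neq] := eqVneq (urecip P) P.
  have usr_P : usr P by rewrite /unitary_self_reciprocal P_monic P0_neq0 RP_eq eqxx.
  exists P; first by split=> //; case: P_irr.
  by rewrite lam_irr // -signr_odd (odd_size_usr_irreducible cardF) ?expr1.
have coprime_P_RP : coprimep P (urecip P).
  rewrite irreducible_poly_coprime //; apply: contraNN RP_neq => P_dvd_RP.
  have [P_unit|] := irredp_XsubCP RP_irr P_dvd_RP.
    by move: P_irr.1; rewrite (eqp_size P_unit) size_poly1.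
  by rewrite eqp_monic // eq_sym.
exists (P * urecip P); first split.
- exact: usr_mul_urecip.
- by rewrite Gauss_dvdp // P_dvd (urecip_dvdp cardF).
- have P_gt1 : (1 < size P)%N by case: P_irr.
  by rewrite size_mul ?monic_neq0 // size_urecip // -subn1 -addnBA ?ltn_addr // ltnW.
rewrite lamM // !lam_irr // mulrNN mulr1.
by rewrite size_mul_predn ?monic_neq0 // size_urecip // addnn -signr_odd odd_double.
Qed.

Lemma liouville_usr f : usr f -> lam f = (-1) ^+ (size f).-1.
Proof.
case: lamL => lam1 lamM _.
have [n] := ubnP (size f); elim: n f => // n IHn f lt_f_n usr_f.
have f_monic : f \is monic by case/and3P: usr_f.
have [f_le1|f_gt1] := leqP (size f) 1.
  by rewrite (monic_size_le1 f_monic f_le1) lam1 size_poly1.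
have [h [usr_h h_dvd h_gt1] lam_h] := liouville_usr_factor usr_f f_gt1.
have h_monic : h \is monic by case/and3P: usr_h.
have usr_g := usr_divp cardF usr_f usr_h h_dvd.
have g_monic : f %/ h \is monic by case/and3P: usr_g.
have lt_g_n : (size (f %/ h)%R < n)%N.
  rewrite -ltnS (leq_ltn_trans _ lt_f_n) // size_divp ?monic_neq0 // ltn_subrL.
  by rewrite -subn1 subn_gt0 h_gt1 ltnW.
rewrite -(divpK h_dvd) lamM // IHn // lam_h -exprD.
by rewrite size_mul_predn ?monic_neq0.
Qed.

End Liouville.

Theorem theorem5p13 (q : nat) (F : finFieldType) (lam : {poly F} -> int) :
  prime_power q -> #|F| = (q ^ 2)%N -> is_liouville lam ->
  forall f : {poly F}, unitary_self_reciprocal q f ->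
    lam f = (-1) ^+ (size f).-1.
Proof.
by move=> _ cardF lamL f; apply: liouville_usr.
Qed.
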